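(* Let $N^{[0]}$ be a $C^0$ net on the grid $T^{[0]}$ given by $s^{[0]}_i=t^{[0]}_i=i$, $i\in\mathbb{Z}$, having the BMSDD property with constant $L$. Let $\boldsymbol{\gamma}^{[s],[k]}=(\boldsymbol{\alpha}^{[s],[k]},\boldsymbol{\beta}^{[s],[k]})\in\mathscr{W}$ and $\boldsymbol{\gamma}^{[t],[k]}=(\boldsymbol{\alpha}^{[t],[k]},\boldsymbol{\beta}^{[t],[k]})\in\mathscr{W}$, $k\ge 0$, satisfy $$\mu^*:=\sup_{k\ge0}\max\{\mu(\boldsymbol{\gamma}^{[s],[k]}),\mu(\boldsymbol{\gamma}^{[t],[k]})\}<\frac{\sqrt3}{3}.$$ Then the corner cutting algorithm for nets of functions (described in the context) starting from $N^{[0]}$ with these weights is convergent, i.e. the sequence of piecewise Coons patches $\mathcal{C}(N^{[k]})$, $k\ge0$, converges uniformly on $\mathbb{R}^2$.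
   Context: Weights: $\mathscr{W}$ is the set of pairs $(\boldsymbol{\alpha},\boldsymbol{\beta})$ of real bi-infinite sequences with $\inf_{i\in\mathbb{Z}}\min\{\alpha_i,1-\beta_i,\beta_i-\alpha_i\}>0$, and $\mu(\boldsymbol{\alpha},\boldsymbol{\beta}):=\sup_{i\in\mathbb{Z}}\max\{\beta_i-\alpha_i,\,1-\beta_{i-1}+\alpha_i\}$. Grids and nets: for strictly increasing bi-infinite real sequences $(s_i)_{i\in\mathbb{Z}}$, $(t_j)_{j\in\mathbb{Z}}$, unbounded above and below, the grid is $T=\bigcup_i\{s_i\}\times\mathbb{R}\ \cup\ \bigcup_j\mathbb{R}\times\{t_j\}$. A net $N=N(T)$ is a function on $T$ (with values in $\mathbb{R}^m$); it is a $C^0$ net if all u-functions $\phi_j(s)=N(s,t_j)$, $\psi_i(t)=N(s_i,t)$ are continuous on $\mathbb{R}$ (and compatible, $\phi_j(s_i)=\psi_i(t_j)$). The piecewise Coons patch $\mathcal{C}(N):\mathbb{R}^2\to\mathbb{R}^m$ is defined on each rectangle $[s_i,s_{i+1}]\times[t_j,t_{j+1}]$, with $h_1=s_{i+1}-s_i$, $h_2=t_{j+1}-t_j$, by $\mathcal{C}(N)(s,t)=\frac{s_{i+1}-s}{h_1}N(s_i,t)+\frac{s-s_i}{h_1}N(s_{i+1},t)+\frac{t_{j+1}-t}{h_2}N(s,t_j)+\frac{t-t_j}{h_2}N(s,t_{j+1})-B(s,t)$, where $B(s,t)=\frac{s_{i+1}-s}{h_1}\big(\frac{t_{j+1}-t}{h_2}N(s_i,t_j)+\frac{t-t_j}{h_2}N(s_i,t_{j+1})\big)+\frac{s-s_i}{h_1}\big(\frac{t_{j+1}-t}{h_2}N(s_{i+1},t_j)+\frac{t-t_j}{h_2}N(s_{i+1},t_{j+1})\big)$.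 BMSDD: for $\sigma_1\ne\sigma_2$, $\tau_1\ne\tau_2$, $[\sigma_1,\sigma_2;\tau_1,\tau_2]N=\frac{N(\sigma_1,\tau_1)+N(\sigma_2,\tau_2)-N(\sigma_2,\tau_1)-N(\sigma_1,\tau_2)}{(\sigma_1-\sigma_2)(\tau_1-\tau_2)}$; a net $N(T)$ has the BMSDD property with constant $L$ if $\|[\sigma_1,\sigma_2;\tau_1,\tau_2]N\|_\infty\le L$ whenever $\sigma_1\ne\sigma_2$, $\tau_1\ne\tau_2$ and all four points $(\sigma_i,\tau_j)$, $i,j\in\{1,2\}$, lie in $T$. Algorithm: given $N^{[k]}$ on the grid $T^{[k]}$ with lines $s^{[k]}_i$, $t^{[k]}_j$, set $s^{[k+1]}_{2i}=(1-\alpha^{[s],[k]}_i)s^{[k]}_i+\alpha^{[s],[k]}_is^{[k]}_{i+1}$, $s^{[k+1]}_{2i+1}=(1-\beta^{[s],[k]}_i)s^{[k]}_i+\beta^{[s],[k]}_is^{[k]}_{i+1}$, and analogously $t^{[k+1]}_{2j},t^{[k+1]}_{2j+1}$ using $\boldsymbol{\gamma}^{[t],[k]}$; let $T^{[k+1]}$ be the grid with lines $s^{[k+1]}_i$, $t^{[k+1]}_j$, and $N^{[k+1]}=\mathcal{C}(N^{[k]})|_{T^{[k+1]}}$. *)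

From Stdlib Require Import Reals Lra ZArith List ClassicalEpsilon.
Open Scope R_scope.

(* A vector of R^m is represented as a function nat -> R; only the
   coordinates c < m are meaningful. *)
Definition vec := nat -> R.

Definition vnorm (m : nat) (v : vec) : R :=
  fold_right Rmax 0 (map (fun c => Rabs (v c)) (seq 0 m)).

(* A net is represented as a function on R^2; only its values on the grid
   are ever used. *)
Definition net := R -> R -> vec.

Definition in_W (a b : Z -> R) : Prop :=
  exists d : R, 0 < d /\
    forall i : Z, d <= a i /\ d <= 1 - b i /\ d <= b i - a i.

Definition mu_le (a b : Z -> R) (M : R) : Prop :=
  forall i : Z, b i - a i <= M /\ 1 - b (i - 1)%Z + a i <= M.

Definition refine (a b : Z -> R) (s : Z -> R) : Z -> R :=
  fun n => let i := (n / 2)%Z in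
    if Z.odd n then (1 - b i) * s i + b i * s (i + 1)%Z
    else (1 - a i) * s i + a i * s (i + 1)%Z.

Fixpoint grid (a b : nat -> Z -> R) (k : nat) : Z -> R :=
  match k with
  | O => IZR
  | S k' => refine (a k') (b k') (grid a b k')
  end.

Definition cell (s : Z -> R) (x : R) : Z :=
  epsilon (inhabits 0%Z) (fun i => s i <= x < s (i + 1)%Z).

Definition coons (s t : Z -> R) (N : net) : net :=
  fun x y c =>
    let i := cell s x in
    let j := cell t y in
    let h1 := s (i + 1)%Z - s i in
    let h2 := t (j + 1)%Z - t j in
    let u0 := (s (i + 1)%Z - x) / h1 in
    let u1 := (x - s i) / h1 in
    let v0 := (t (j + 1)%Z - y) / h2 in
    let v1 := (y - t j) / h2 in
    u0 * N (s i) y c + u1 * N (s (i + 1)%Z) y c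
    + v0 * N x (t j) c + v1 * N x (t (j + 1)%Z) c
    - (u0 * (v0 * N (s i) (t j) c + v1 * N (s i) (t (j + 1)%Z) c)
       + u1 * (v0 * N (s (i + 1)%Z) (t j) c + v1 * N (s (i + 1)%Z) (t (j + 1)%Z) c)).

(* The sequence C(N^[k]) produced by the algorithm:
   N^[k+1] = C(N^[k]) restricted to T^[k+1]; since the Coons patch only
   evaluates its argument on the grid, C(N^[k+1]) = coons T^[k+1] (C(N^[k])). *)
Fixpoint patch (aS bS aT bT : nat -> Z -> R) (N0 : net) (k : nat) : net :=
  match k with
  | O => coons (grid aS bS 0) (grid aT bT 0) N0
  | S k' => coons (grid aS bS k) (grid aT bT k) (patch aS bS aT bT N0 k')
  end.

Definition in_grid (s t : Z -> R) (x y : R) : Prop :=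
  (exists i : Z, x = s i) \/ (exists j : Z, y = t j).

Definition C0_net (m : nat) (s t : Z -> R) (N : net) : Prop :=
  (forall (j : Z) (c : nat), (c < m)%nat -> continuity (fun x => N x (t j) c)) /\
  (forall (i : Z) (c : nat), (c < m)%nat -> continuity (fun y => N (s i) y c)).

Definition bmsdd (N : net) (s1 s2 t1 t2 : R) : vec :=
  fun c => (N s1 t1 c + N s2 t2 c - N s2 t1 c - N s1 t2 c) / ((s1 - s2) * (t1 - t2)).

Definition BMSDD (m : nat) (s t : Z -> R) (N : net) (L : R) : Prop :=
  forall s1 s2 t1 t2 : R, s1 <> s2 -> t1 <> t2 ->
    in_grid s t s1 t1 -> in_grid s t s1 t2 ->
    in_grid s t s2 t1 -> in_grid s t s2 t2 ->
    vnorm m (bmsdd N s1 s2 t1 t2) <= L.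

Definition unif_conv (m : nat) (F : nat -> net) : Prop :=
  exists G : net, forall eps : R, 0 < eps ->
    exists K : nat, forall k : nat, (K <= k)%nat ->
      forall x y : R, vnorm m (fun c => F k x y c - G x y c) < eps.

(* The error of the Coons patch at (x, y) is minus the bilinear interpolation, over the
   corners (x', y') of the cell of (x, y), of the mixed differences
   N(x', y') - N(x', y) - N(x, y') + N(x, y).
   So if every mixed divided difference of N is bounded by K, the patch is within K h_s h_t of N,
   where h_s, h_t bound the grid spacings.  The patch is a sum of three one-directional
   interpolants, each of which preserves the bound K, so passing to the patch at most triples K.
   Each corner cutting step shrinks the spacings by the factor mu*, hence
   |C(N^[k+1]) - C(N^[k])| <= 3^(k+1) L mu*^(2k+2) = L (3 mu*^2)^(k+1),
   a geometric sequence since 3 mu*^2 < 1 exactly when mu* < sqrt 3 / 3. *)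

From Stdlib Require Import Reals ZArith Lra Lia List ClassicalEpsilon.
Open Scope R_scope.

Lemma Rmax_fold_abs_ge (f : nat -> R) (st n c : nat) : (st <= c < st + n)%nat ->
  Rabs (f c) <= fold_right Rmax 0 (map (fun c => Rabs (f c)) (seq st n)).
Proof.
  revert st; induction n as [|n IH]; intros st Hc; [lia|]; simpl.
  destruct (Nat.eq_dec c st) as [->|Hne]; [apply Rmax_l|].
  eapply Rle_trans; [apply (IH (S st)); lia|apply Rmax_r].
Qed.

Lemma Rmax_fold_abs_lt (f : nat -> R) (st n : nat) (eps : R) : 0 < eps ->
  (forall c, (st <= c < st + n)%nat -> Rabs (f c) < eps) ->
  fold_right Rmax 0 (map (fun c => Rabs (f c)) (seq st n)) < eps.
Proof.
  revert st; induction n as [|n IH]; intros st Heps Hf; simpl; [lra|].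
  apply Rmax_lub_lt; [apply Hf; lia|apply IH; auto; intros; apply Hf; lia].
Qed.

Lemma vnorm_ge (m : nat) (v : vec) (c : nat) : (c < m)%nat -> Rabs (v c) <= vnorm m v.
Proof. intros; apply Rmax_fold_abs_ge; lia. Qed.

Lemma vnorm_lt (m : nat) (v : vec) (eps : R) : 0 < eps ->
  (forall c, (c < m)%nat -> Rabs (v c) < eps) -> vnorm m v < eps.
Proof. intros Heps Hv; apply Rmax_fold_abs_lt; auto; intros; apply Hv; lia. Qed.

Definition partition_line (s : Z -> R) : Prop :=
  (forall n, s n < s (n + 1)%Z) /\ (forall x, exists i, s i <= x < s (i + 1)%Z).

Lemma partition_line_lt (s : Z -> R) (a b : Z) : partition_line s -> (a < b)%Z -> s a < s b.
Proof.
  intros [Hstep _] Hab. replace b with (a + Z.of_nat (S (Z.to_nat (b - a - 1))))%Z by lia.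
  induction (Z.to_nat (b - a - 1)) as [|n IH].
  - apply Hstep.
  - rewrite Nat2Z.inj_succ, Z.add_succ_r. eapply Rlt_trans; [apply IH|apply Hstep].
Qed.

Lemma partition_line_le (s : Z -> R) (a b : Z) : partition_line s -> (a <= b)%Z -> s a <= s b.
Proof.
  intros Hs Hab. destruct (Z.eq_dec a b) as [->|]; [lra|].
  left; apply partition_line_lt; auto; lia.
Qed.

Lemma cell_spec (s : Z -> R) (x : R) : partition_line s ->
  s (cell s x) <= x < s (cell s x + 1)%Z.
Proof. intros [_ Hcov]. exact (epsilon_spec _ (fun i => s i <= x < s (i + 1)%Z) (Hcov x)). Qed.

Definition interp (s : Z -> R) (f : R -> R) (x : R) : R :=
  let i := cell s x in
  (s (i + 1)%Z - x) / (s (i + 1)%Z - s i) * f (s i)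
  + (x - s i) / (s (i + 1)%Z - s i) * f (s (i + 1)%Z).

Definition cell_interp (s : Z -> R) (f : R -> R) (i : Z) (x : R) : R :=
  f (s i) + (x - s i) / (s (i + 1)%Z - s i) * (f (s (i + 1)%Z) - f (s i)).

Lemma interp_eq_cell_interp (s : Z -> R) (f : R -> R) (x : R) : partition_line s ->
  interp s f x = cell_interp s f (cell s x) x.
Proof. intros Hs. pose proof (cell_spec s x Hs). unfold interp, cell_interp. field. lra. Qed.

Lemma cell_interp_left (s : Z -> R) (f : R -> R) (i : Z) : cell_interp s f i (s i) = f (s i).
Proof. unfold cell_interp. unfold Rminus at 1. rewrite Rplus_opp_r. unfold Rdiv. ring. Qed.

Lemma cell_interp_right (s : Z -> R) (f : R -> R) (i : Z) : s i < s (i + 1)%Z ->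
  cell_interp s f i (s (i + 1)%Z) = f (s (i + 1)%Z).
Proof. intros. unfold cell_interp. field. lra. Qed.

Lemma cell_interp_lipschitz (s : Z -> R) (f : R -> R) (i : Z) (K x y : R) : s i < s (i + 1)%Z ->
  Rabs (f (s (i + 1)%Z) - f (s i)) <= K * (s (i + 1)%Z - s i) ->
  Rabs (cell_interp s f i y - cell_interp s f i x) <= K * Rabs (y - x).
Proof.
  intros Hh Hf. set (h := s (i + 1)%Z - s i) in *.
  replace (cell_interp s f i y - cell_interp s f i x)
    with ((y - x) * ((f (s (i + 1)%Z) - f (s i)) / h))
    by (unfold cell_interp; fold h; field; unfold h; lra).
  rewrite Rabs_mult, Rmult_comm. apply Rmult_le_compat_r; [apply Rabs_pos|].
  unfold Rdiv. rewrite Rabs_mult, Rabs_inv, (Rabs_pos_eq h) by (unfold h; lra).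
  apply Rmult_le_reg_r with h; [unfold h; lra|].
  rewrite Rmult_assoc, Rinv_l by (unfold h; lra). lra.
Qed.

Lemma interp_lipschitz (s : Z -> R) (f : R -> R) (K : R) : partition_line s ->
  (forall a b, Rabs (f (s a) - f (s b)) <= K * Rabs (s a - s b)) ->
  forall x1 x2, Rabs (interp s f x2 - interp s f x1) <= K * Rabs (x2 - x1).
Proof.
  intros Hs Hf.
  assert (Hstep : forall i, Rabs (f (s (i + 1)%Z) - f (s i)) <= K * (s (i + 1)%Z - s i)).
  { intros i. rewrite <- (Rabs_pos_eq (s (i + 1)%Z - s i)); [apply Hf|].
    pose proof (proj1 Hs i); lra. }
  assert (Hmono : forall x1 x2, x1 <= x2 ->
            Rabs (interp s f x2 - interp s f x1) <= K * Rabs (x2 - x1)).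
  { intros x1 x2 Hx. rewrite !interp_eq_cell_interp by auto.
    pose proof (cell_spec s x1 Hs) as C1. pose proof (cell_spec s x2 Hs) as C2.
    revert C1 C2. generalize (cell s x1) (cell s x2). intros i j C1 C2.
    destruct (Z.lt_trichotomy i j) as [Hij|[<-|Hji]].
    - assert (Hsij : s (i + 1)%Z <= s j) by (apply partition_line_le; auto; lia).
      replace (cell_interp s f j x2 - cell_interp s f i x1) with
        ((cell_interp s f j x2 - cell_interp s f j (s j)) + (f (s j) - f (s (i + 1)%Z))
         + (cell_interp s f i (s (i + 1)%Z) - cell_interp s f i x1))
        by (rewrite cell_interp_left, cell_interp_right by lra; ring).
      pose proof (cell_interp_lipschitz s f j K (s j) x2 ltac:(lra) (Hstep j)) as E1.
      pose proof (Hf j (i + 1)%Z) as E2.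
      pose proof (cell_interp_lipschitz s f i K x1 (s (i + 1)%Z) ltac:(lra) (Hstep i)) as E3.
      rewrite (Rabs_pos_eq (x2 - s j)) in E1 by lra.
      rewrite (Rabs_pos_eq (s j - s (i + 1)%Z)) in E2 by lra.
      rewrite (Rabs_pos_eq (s (i + 1)%Z - x1)) in E3 by lra.
      rewrite (Rabs_pos_eq (x2 - x1)) by lra.
      eapply Rle_trans; [apply Rabs_triang|].
      eapply Rle_trans; [apply Rplus_le_compat_r, Rabs_triang|]. lra.
    - apply cell_interp_lipschitz; [lra|apply Hstep].
    - assert (s (j + 1)%Z <= s i) by (apply partition_line_le; auto; lia). lra. }
  intros x1 x2. destruct (Rle_lt_dec x1 x2); [now apply Hmono|].
  rewrite Rabs_minus_sym, (Rabs_minus_sym x2). apply Hmono; lra.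
Qed.

Definition mixed_diff (g : R -> R -> R) (x1 x2 y1 y2 : R) : R :=
  g x1 y1 + g x2 y2 - g x2 y1 - g x1 y2.

Definition mixed_bounded (g : R -> R -> R) (K : R) : Prop :=
  forall x1 x2 y1 y2, Rabs (mixed_diff g x1 x2 y1 y2) <= K * Rabs (x1 - x2) * Rabs (y1 - y2).

Lemma mixed_bounded_nonneg (g : R -> R -> R) (K : R) : mixed_bounded g K -> 0 <= K.
Proof.
  intros Hg. pose proof (Hg 0 1 0 1) as H1. pose proof (Rabs_pos (mixed_diff g 0 1 0 1)).
  rewrite Rabs_minus_sym, Rminus_0_r, Rabs_R1 in H1. lra.
Qed.

Lemma mixed_diff_swap (g : R -> R -> R) (x1 x2 y1 y2 : R) :
  mixed_diff g x1 x2 y1 y2 = mixed_diff (fun y x => g x y) y1 y2 x1 x2.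
Proof. unfold mixed_diff; ring. Qed.

Lemma interp_sub (s : Z -> R) (f1 f2 : R -> R) (x : R) :
  interp s (fun z => f1 z - f2 z) x = interp s f1 x - interp s f2 x.
Proof. unfold interp; ring. Qed.

Lemma mixed_bounded_interp_x (s : Z -> R) (g : R -> R -> R) (K : R) : partition_line s ->
  (forall a b y1 y2,
     Rabs (mixed_diff g (s a) (s b) y1 y2) <= K * Rabs (s a - s b) * Rabs (y1 - y2)) ->
  mixed_bounded (fun x y => interp s (fun x' => g x' y) x) K.
Proof.
  intros Hs Hg x1 x2 y1 y2. unfold mixed_diff.
  replace (_ + _ - _ - _) with
    (interp s (fun x' => g x' y2 - g x' y1) x2 - interp s (fun x' => g x' y2 - g x' y1) x1)
    by (rewrite !interp_sub; ring).
  eapply Rle_trans; [apply (interp_lipschitz s _ (K * Rabs (y1 - y2))); auto|].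
  - intros a b.
    replace (g (s a) y2 - g (s a) y1 - (g (s b) y2 - g (s b) y1))
      with (- mixed_diff g (s a) (s b) y1 y2) by (unfold mixed_diff; ring).
    rewrite Rabs_Ropp. eapply Rle_trans; [apply Hg|]. right; ring.
  - rewrite (Rabs_minus_sym x2 x1). right; ring.
Qed.

Lemma mixed_bounded_interp_y (t : Z -> R) (g : R -> R -> R) (K : R) : partition_line t ->
  (forall x1 x2 a b,
     Rabs (mixed_diff g x1 x2 (t a) (t b)) <= K * Rabs (x1 - x2) * Rabs (t a - t b)) ->
  mixed_bounded (fun x y => interp t (fun y' => g x y') y) K.
Proof.
  intros Ht Hg x1 x2 y1 y2. rewrite mixed_diff_swap.
  eapply Rle_trans; [apply (mixed_bounded_interp_x t (fun y x => g x y) K Ht)|]; [|right; ring].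
  intros a b x3 x4. rewrite <- mixed_diff_swap. eapply Rle_trans; [apply Hg|]. right; ring.
Qed.

Lemma coons_interp (s t : Z -> R) (G : net) (x y : R) (c : nat) :
  coons s t G x y c = interp s (fun x' => G x' y c) x + interp t (fun y' => G x y' c) y
    - interp s (fun x' => interp t (fun y' => G x' y' c) y) x.
Proof. unfold coons, interp; ring. Qed.

Lemma Rabs_add_sub_le (a b d P : R) : Rabs a <= P -> Rabs b <= P -> Rabs d <= P ->
  Rabs (a + b - d) <= 3 * P.
Proof.
  intros Ha Hb Hd. unfold Rminus. eapply Rle_trans; [apply Rabs_triang|].
  rewrite Rabs_Ropp. pose proof (Rabs_triang a b). lra.
Qed.

Lemma coons_mixed_bounded (s t : Z -> R) (G : net) (c : nat) (K : R) :
  partition_line s -> partition_line t ->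
  (forall a b y1 y2, Rabs (mixed_diff (fun x y => G x y c) (s a) (s b) y1 y2)
                       <= K * Rabs (s a - s b) * Rabs (y1 - y2)) ->
  (forall x1 x2 a b, Rabs (mixed_diff (fun x y => G x y c) x1 x2 (t a) (t b))
                       <= K * Rabs (x1 - x2) * Rabs (t a - t b)) ->
  mixed_bounded (fun x y => coons s t G x y c) (3 * K).
Proof.
  intros Hs Ht HGs HGt x1 x2 y1 y2.
  set (Ix := fun x y => interp s (fun x' => G x' y c) x).
  set (Iy := fun x y => interp t (fun y' => G x y' c) y).
  set (Ixy := fun x y => interp s (fun x' => Iy x' y) x).
  assert (HIy : mixed_bounded Iy K) by (apply mixed_bounded_interp_y; auto).
  replace (mixed_diff (fun x y => coons s t G x y c) x1 x2 y1 y2) with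
    (mixed_diff Ix x1 x2 y1 y2 + mixed_diff Iy x1 x2 y1 y2 - mixed_diff Ixy x1 x2 y1 y2)
    by (unfold mixed_diff, Ixy, Ix, Iy; rewrite !coons_interp; ring).
  rewrite !Rmult_assoc. apply Rabs_add_sub_le; rewrite <- Rmult_assoc.
  - apply mixed_bounded_interp_x; auto.
  - apply HIy.
  - apply mixed_bounded_interp_x; auto.
Qed.

Lemma interp_abs_le (s : Z -> R) (f : R -> R) (x E : R) : partition_line s ->
  Rabs (f (s (cell s x))) <= E -> Rabs (f (s (cell s x + 1)%Z)) <= E ->
  Rabs (interp s f x) <= E.
Proof.
  intros Hs H0 H1. pose proof (cell_spec s x Hs) as Hx. unfold interp.
  set (i := cell s x) in *.
  assert (Hw0 : 0 <= (s (i + 1)%Z - x) / (s (i + 1)%Z - s i))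
    by (apply Rmult_le_pos; [|left; apply Rinv_0_lt_compat]; lra).
  assert (Hw1 : 0 <= (x - s i) / (s (i + 1)%Z - s i))
    by (apply Rmult_le_pos; [|left; apply Rinv_0_lt_compat]; lra).
  assert (Hsum : (s (i + 1)%Z - x) / (s (i + 1)%Z - s i) + (x - s i) / (s (i + 1)%Z - s i) = 1)
    by (field; lra).
  eapply Rle_trans; [apply Rabs_triang|]. rewrite !Rabs_mult, !(Rabs_pos_eq (_ / _)) by auto.
  pose proof (Rmult_le_compat_l _ _ _ Hw0 H0). pose proof (Rmult_le_compat_l _ _ _ Hw1 H1).
  rewrite <- (Rmult_1_l E), <- Hsum, Rmult_plus_distr_r. lra.
Qed.

Lemma coons_sub (s t : Z -> R) (G : net) (x y : R) (c : nat) :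
  partition_line s -> partition_line t ->
  coons s t G x y c - G x y c
  = - interp s (fun x' => interp t (fun y' => mixed_diff (fun u v => G u v c) x' x y' y) y) x.
Proof.
  intros Hs Ht. pose proof (cell_spec s x Hs). pose proof (cell_spec t y Ht).
  unfold coons, interp, mixed_diff. field. lra.
Qed.

Lemma cell_node_dist (s : Z -> R) (h x : R) : partition_line s ->
  (forall i, s (i + 1)%Z - s i <= h) ->
  Rabs (s (cell s x) - x) <= h /\ Rabs (s (cell s x + 1)%Z - x) <= h.
Proof.
  intros Hs Hh. pose proof (cell_spec s x Hs). pose proof (Hh (cell s x)).
  split; unfold Rabs; destruct Rcase_abs; lra.
Qed.

Lemma coons_error (s t : Z -> R) (G : net) (c : nat) (K hs ht : R) :
  partition_line s -> partition_line t -> mixed_bounded (fun x y => G x y c) K ->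
  (forall i, s (i + 1)%Z - s i <= hs) -> (forall j, t (j + 1)%Z - t j <= ht) ->
  forall x y, Rabs (coons s t G x y c - G x y c) <= K * hs * ht.
Proof.
  intros Hs Ht HG Hhs Hht x y. pose proof (mixed_bounded_nonneg _ _ HG) as HK.
  destruct (cell_node_dist s hs x Hs Hhs) as [Hx0 Hx1].
  destruct (cell_node_dist t ht y Ht Hht) as [Hy0 Hy1].
  assert (Hnode : forall x' y', Rabs (x' - x) <= hs -> Rabs (y' - y) <= ht ->
            Rabs (mixed_diff (fun u v => G u v c) x' x y' y) <= K * hs * ht).
  { intros x' y' Hx' Hy'. eapply Rle_trans; [apply HG|]. rewrite !Rmult_assoc.
    apply Rmult_le_compat_l; auto. apply Rmult_le_compat; auto using Rabs_pos. }
  rewrite coons_sub, Rabs_Ropp by auto.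
  apply interp_abs_le; auto; apply interp_abs_le; auto.
Qed.

Lemma refine_even (a b s : Z -> R) (i : Z) :
  refine a b s (2 * i)%Z = (1 - a i) * s i + a i * s (i + 1)%Z.
Proof.
  unfold refine. rewrite Z.odd_even.
  now replace (2 * i / 2)%Z with i by (Z.div_mod_to_equations; lia).
Qed.

Lemma refine_odd (a b s : Z -> R) (i : Z) :
  refine a b s (2 * i + 1)%Z = (1 - b i) * s i + b i * s (i + 1)%Z.
Proof.
  unfold refine. rewrite Z.odd_odd.
  now replace ((2 * i + 1) / 2)%Z with i by (Z.div_mod_to_equations; lia).
Qed.

Lemma refine_lt_succ (a b s : Z -> R) : in_W a b -> (forall n, s n < s (n + 1)%Z) ->
  forall n, refine a b s n < refine a b s (n + 1)%Z.
Proof.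
  intros [d [Hd HW]] Hs n. destruct (Z.Even_or_Odd n) as [[i ->]|[i ->]].
  - rewrite refine_even, refine_odd. destruct (HW i) as [_ [_ Hab]].
    pose proof (Hs i). nra.
  - replace (2 * i + 1 + 1)%Z with (2 * (i + 1))%Z by lia.
    rewrite refine_even, refine_odd. destruct (HW i) as [_ [Hb _]].
    destruct (HW (i + 1)%Z) as [Ha _].
    pose proof (Hs i). pose proof (Hs (i + 1)%Z). nra.
Qed.

Lemma refine_step_le (a b s : Z -> R) (M h : R) : in_W a b -> mu_le a b M ->
  (forall n, s n < s (n + 1)%Z) -> (forall n, s (n + 1)%Z - s n <= h) ->
  forall n, refine a b s (n + 1)%Z - refine a b s n <= M * h.
Proof.
  intros [d [Hd HW]] Hmu Hs Hh n. destruct (Z.Even_or_Odd n) as [[i ->]|[i ->]].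
  - rewrite refine_even, refine_odd. destruct (HW i) as [_ [_ Hab]].
    destruct (Hmu i) as [HM _]. pose proof (Hs i). pose proof (Hh i). nra.
  - replace (2 * i + 1 + 1)%Z with (2 * (i + 1))%Z by lia.
    rewrite refine_even, refine_odd. destruct (HW i) as [_ [Hb _]].
    destruct (HW (i + 1)%Z) as [Ha _]. destruct (Hmu (i + 1)%Z) as [_ HM].
    replace (i + 1 - 1)%Z with i in HM by lia.
    pose proof (Hs i). pose proof (Hs (i + 1)%Z). pose proof (Hh i). pose proof (Hh (i + 1)%Z).
    nra.
Qed.

Lemma refine_covers (a b s : Z -> R) : in_W a b -> partition_line s ->
  forall x, exists n, refine a b s n <= x < refine a b s (n + 1)%Z.
Proof.
  intros [d [Hd HW]] Hs x. destruct (proj2 Hs x) as [i Hi].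
  assert (Hleft : refine a b s (2 * (i - 1) + 1)%Z <= s i).
  { rewrite refine_odd. replace (i - 1 + 1)%Z with i by lia.
    destruct (HW (i - 1)%Z) as [_ [Hb _]]. pose proof (proj1 Hs (i - 1)%Z) as Hstep.
    replace (i - 1 + 1)%Z with i in Hstep by lia. nra. }
  assert (Hright : s (i + 1)%Z <= refine a b s (2 * (i + 1))%Z).
  { rewrite refine_even. destruct (HW (i + 1)%Z) as [Ha _].
    pose proof (proj1 Hs (i + 1)%Z). nra. }
  destruct (Rlt_le_dec x (refine a b s (2 * i)%Z)).
  - exists (2 * (i - 1) + 1)%Z. replace (2 * (i - 1) + 1 + 1)%Z with (2 * i)%Z by lia. lra.
  - destruct (Rlt_le_dec x (refine a b s (2 * i + 1)%Z)).
    + exists (2 * i)%Z. lra.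
    + exists (2 * i + 1)%Z. replace (2 * i + 1 + 1)%Z with (2 * (i + 1))%Z by lia. lra.
Qed.

Lemma grid_partition_line (a b : nat -> Z -> R) :
  (forall k, in_W (a k) (b k)) -> forall k, partition_line (grid a b k).
Proof.
  intros HW k. induction k as [|k IH]; simpl.
  - split.
    + intros n. rewrite plus_IZR. lra.
    + intros x. exists (up x - 1)%Z. pose proof (archimed x).
      rewrite plus_IZR, minus_IZR. simpl. lra.
  - split; [apply refine_lt_succ; [apply HW|apply IH]|apply refine_covers; [apply HW|exact IH]].
Qed.

Lemma grid_step_le (a b : nat -> Z -> R) (M : R) :
  (forall k, in_W (a k) (b k)) -> (forall k, mu_le (a k) (b k) M) ->
  forall k n, grid a b k (n + 1)%Z - grid a b k n <= M ^ k.
Proof.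
  intros HW Hmu k. induction k as [|k IH]; intros n; simpl.
  - rewrite plus_IZR. lra.
  - apply refine_step_le; auto. apply grid_partition_line; auto.
Qed.

Lemma pow_eventually_lt (r C eps : R) : 0 <= r < 1 -> 0 < eps ->
  exists N, forall n, (N <= n)%nat -> C * r ^ n < eps.
Proof.
  intros Hr Heps.
  destruct (pow_lt_1_zero r ltac:(rewrite Rabs_pos_eq; lra) (eps / (Rabs C + 1)))
    as [N HN]; [apply Rdiv_lt_0_compat; pose proof (Rabs_pos C); lra|].
  exists N. intros n Hn. specialize (HN n Hn).
  rewrite Rabs_pos_eq in HN by (apply pow_le; lra).
  apply Rle_lt_trans with (Rabs C * r ^ n).
  - apply Rmult_le_compat_r; [apply pow_le; lra|apply Rle_abs].
  - apply Rle_lt_trans with (Rabs C * (eps / (Rabs C + 1))).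
    + apply Rmult_le_compat_l; [apply Rabs_pos|lra].
    + pose proof (Rabs_pos C). apply Rmult_lt_reg_r with (Rabs C + 1); [lra|].
      field_simplify; lra.
Qed.

Section GeometricSteps.

Variables (u : nat -> R) (D r : R).
Hypothesis Hr : 0 <= r < 1.
Hypothesis Hstep : forall k, Rabs (u (S k) - u k) <= D * r ^ k.

Lemma geometric_steps_tail (n p : nat) :
  Rabs (u (n + p) - u n) <= D / (1 - r) * (r ^ n - r ^ (n + p)).
Proof.
  induction p as [|p IH].
  - rewrite Nat.add_0_r, Rminus_diag, Rabs_R0. lra.
  - rewrite Nat.add_succ_r.
    replace (u (S (n + p)) - u n) with ((u (S (n + p)) - u (n + p)%nat) + (u (n + p)%nat - u n))
      by ring.
    eapply Rle_trans; [apply Rabs_triang|].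
    pose proof (Hstep (n + p)). simpl pow.
    replace (D / (1 - r) * (r ^ n - r * r ^ (n + p)))
      with (D * r ^ (n + p) + D / (1 - r) * (r ^ n - r ^ (n + p))) by (field; lra).
    lra.
Qed.

Lemma geometric_steps_cauchy_bound (n p : nat) :
  Rabs (u (n + p) - u n) <= D / (1 - r) * r ^ n.
Proof.
  assert (HD : 0 <= D).
  { pose proof (Hstep 0) as H0. pose proof (Rabs_pos (u 1%nat - u 0%nat)). simpl in H0. lra. }
  eapply Rle_trans; [apply geometric_steps_tail|].
  apply Rmult_le_compat_l.
  - apply Rmult_le_pos; [|left; apply Rinv_0_lt_compat]; lra.
  - pose proof (pow_le r (n + p) (proj1 Hr)). lra.
Qed.

Lemma geometric_steps_limit : exists l, forall n, Rabs (u n - l) <= D / (1 - r) * r ^ n.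
Proof.
  assert (Hcauchy : Cauchy_crit u).
  { intros eps Heps. destruct (pow_eventually_lt r (D / (1 - r)) eps Hr Heps) as [N HN].
    exists N. intros n m Hn Hm. unfold R_dist.
    destruct (Nat.le_ge_cases n m) as [Hnm|Hmn].
    - replace m with (n + (m - n))%nat by lia. rewrite Rabs_minus_sym.
      eapply Rle_lt_trans; [apply geometric_steps_cauchy_bound|]. apply HN; lia.
    - replace n with (m + (n - m))%nat by lia.
      eapply Rle_lt_trans; [apply geometric_steps_cauchy_bound|]. apply HN; lia. }
  destruct (R_complete u Hcauchy) as [l Hl]. exists l. intros n.
  apply le_epsilon. intros eps Heps.
  destruct (Hl eps Heps) as [N HN]. specialize (HN (n + N)%nat ltac:(lia)). unfold R_dist in HN.
  pose proof (geometric_steps_cauchy_bound n N) as Htail. rewrite Rabs_minus_sym in Htail.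
  replace (u n - l) with ((u n - u (n + N)%nat) + (u (n + N)%nat - l)) by ring.
  eapply Rle_trans; [apply Rabs_triang|]. lra.
Qed.

End GeometricSteps.

Lemma unif_conv_geometric (m : nat) (F : nat -> net) (D r : R) : 0 <= r < 1 ->
  (forall k x y c, (c < m)%nat -> Rabs (F (S k) x y c - F k x y c) <= D * r ^ k) ->
  unif_conv m F.
Proof.
  intros Hr Hstep. set (C := D / (1 - r)).
  set (P := fun x y c l => forall n, Rabs (F n x y c - l) <= C * r ^ n).
  exists (fun x y c => epsilon (inhabits 0) (P x y c)).
  intros eps Heps. destruct (pow_eventually_lt r C eps Hr Heps) as [N HN].
  exists N. intros k Hk x y. apply vnorm_lt; auto. intros c Hc.
  assert (Hlim : exists l, P x y c l)
    by (apply (geometric_steps_limit (fun n => F n x y c) D r Hr); intros; apply Hstep, Hc).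
  eapply Rle_lt_trans; [apply (epsilon_spec _ _ Hlim)|]. apply HN, Hk.
Qed.

Lemma BMSDD_mixed_diff_le (m : nat) (s t : Z -> R) (N : net) (L : R) (c : nat)
  (x1 x2 y1 y2 : R) : BMSDD m s t N L -> (c < m)%nat ->
  in_grid s t x1 y1 -> in_grid s t x1 y2 -> in_grid s t x2 y1 -> in_grid s t x2 y2 ->
  Rabs (mixed_diff (fun x y => N x y c) x1 x2 y1 y2) <= L * Rabs (x1 - x2) * Rabs (y1 - y2).
Proof.
  intros HB Hc G11 G12 G21 G22.
  destruct (Req_dec x1 x2) as [<-|Hx].
  { unfold mixed_diff. rewrite Rminus_diag, Rabs_R0. replace (_ + _ - _ - _) with 0 by ring.
    rewrite Rabs_R0. lra. }
  destruct (Req_dec y1 y2) as [<-|Hy].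
  { unfold mixed_diff. rewrite (Rminus_diag y1), Rabs_R0. replace (_ + _ - _ - _) with 0 by ring.
    rewrite Rabs_R0. lra. }
  replace (mixed_diff (fun x y => N x y c) x1 x2 y1 y2)
    with (bmsdd N x1 x2 y1 y2 c * ((x1 - x2) * (y1 - y2)))
    by (unfold bmsdd, mixed_diff; field; split; lra).
  rewrite !Rabs_mult, <- Rmult_assoc.
  apply Rmult_le_compat_r; [apply Rabs_pos|]. apply Rmult_le_compat_r; [apply Rabs_pos|].
  eapply Rle_trans; [apply vnorm_ge, Hc|]. apply HB; auto.
Qed.

Lemma BMSDD_coons_mixed_bounded (m : nat) (s t : Z -> R) (N : net) (L : R) (c : nat) :
  BMSDD m s t N L -> partition_line s -> partition_line t -> (c < m)%nat ->
  mixed_bounded (fun x y => coons s t N x y c) (3 * L).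
Proof.
  intros HB Hs Ht Hc. apply coons_mixed_bounded; auto; intros;
    apply (BMSDD_mixed_diff_le m s t); auto; unfold in_grid; eauto.
Qed.

Lemma mu_le_nonneg (a b : Z -> R) (M : R) : in_W a b -> mu_le a b M -> 0 <= M.
Proof.
  intros [d [Hd HW]] Hmu. destruct (HW 0%Z) as [_ [_ Hab]]. destruct (Hmu 0%Z). lra.
Qed.

Lemma patch_mixed_bounded (m : nat) (N0 : net) (L : R) (aS bS aT bT : nat -> Z -> R) (c : nat) :
  BMSDD m IZR IZR N0 L -> (forall k, in_W (aS k) (bS k)) -> (forall k, in_W (aT k) (bT k)) ->
  (c < m)%nat ->
  forall k, mixed_bounded (fun x y => patch aS bS aT bT N0 k x y c) (3 ^ S k * L).
Proof.
  intros HB HWs HWt Hc k.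
  pose proof (grid_partition_line aS bS HWs) as Hs.
  pose proof (grid_partition_line aT bT HWt) as Ht.
  induction k as [|k IH].
  - rewrite pow_1. exact (BMSDD_coons_mixed_bounded m _ _ N0 L c HB (Hs 0%nat) (Ht 0%nat) Hc).
  - rewrite <- tech_pow_Rmult, Rmult_assoc.
    apply coons_mixed_bounded; auto; intros; apply IH.
Qed.

Theorem theorem2 (m : nat) (N0 : net) (L : R)
  (aS bS aT bT : nat -> Z -> R) :
  C0_net m IZR IZR N0 ->
  BMSDD m IZR IZR N0 L ->
  (forall k : nat, in_W (aS k) (bS k)) ->
  (forall k : nat, in_W (aT k) (bT k)) ->
  (exists M : R, M < sqrt 3 / 3 /\
     forall k : nat, mu_le (aS k) (bS k) M /\ mu_le (aT k) (bT k) M) ->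
  unif_conv m (patch aS bS aT bT N0).
Proof.
  intros _ HB HWs HWt [M [HM3 Hmu]].
  pose proof (mu_le_nonneg _ _ M (HWs 0%nat) (proj1 (Hmu 0%nat))) as HM.
  assert (Hr : 0 <= 3 * M * M < 1) by (pose proof (sqrt_sqrt 3 ltac:(lra)); nra).
  apply (unif_conv_geometric m _ (L * (3 * M * M)) (3 * M * M) Hr).
  intros k x y c Hc.
  change (patch aS bS aT bT N0 (S k))
    with (coons (grid aS bS (S k)) (grid aT bT (S k)) (patch aS bS aT bT N0 k)).
  eapply Rle_trans.
  - apply (coons_error _ _ _ c (3 ^ S k * L) (M ^ S k) (M ^ S k)).
    + apply grid_partition_line, HWs.
    + apply grid_partition_line, HWt.
    + apply (patch_mixed_bounded m); auto.
    + apply grid_step_le; [apply HWs|apply Hmu].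
    + apply grid_step_le; [apply HWt|apply Hmu].
  - right. rewrite !Rpow_mult_distr. simpl. ring.
Qed.
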